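(* Let $G$ be a topological group acting continuously on a topological space $X$, let $\Delta$ be the partition of $X$ into $G$-orbits, $Y=X/G$ with the quotient topology, and $p:X\to Y$ the projection. Suppose that (a) $X$ is a Hausdorff Baire space; (b) $G=\bigcup_{i=1}^\infty G_i$ is a union of countably many compact sets $G_i$; (c) the action has at least two distinct orbits; (d) each orbit is dense in $X$. Then $p$ has property (CONT) but does not have property (COMP).
   Context: A Baire space is a topological space that is not a countable union of nowhere dense subsets of itself. A $\Delta$-map is a continuous $h:X\to X$ mapping each element of $\Delta$ into some element of $\Delta$; $\mathrm{End}(X,\Delta)$ is the monoid of $\Delta$-maps, $\mathrm{End}(Y)=C(Y,Y)$, and $\psi(h)$ is the unique map with $p\circ h=\psi(h)\circ p$. Property (COMP): for every compact $L\subset Y$ there is a compact $K\subset X$ with $p(K)=L$. Property (CONT): $\psi:\mathrm{End}(X,\Delta)\to\mathrm{End}(Y)$ is continuous with respect to compact open topologies. *)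

From HB Require Import structures.
From mathcomp Require Import all_boot all_order all_algebra.
From mathcomp Require Import all_classical all_reals all_analysis.
Set Implicit Arguments.
Unset Strict Implicit.
Unset Printing Implicit Defensive.
Local Open Scope classical_set_scope.

Definition is_topological_group (G : topologicalType)
  (mul : G -> G -> G) (inv : G -> G) (one : G) : Prop :=
  [/\ (forall a b c, mul a (mul b c) = mul (mul a b) c),
      (forall a, mul one a = a /\ mul a one = a),
      (forall a, mul (inv a) a = one /\ mul a (inv a) = one),
      continuous (fun q : G * G => mul q.1 q.2)
    & continuous inv].

Definition is_continuous_action (G X : topologicalType)
  (mul : G -> G -> G) (one : G) (act : G -> X -> X) : Prop :=
  [/\ (forall x, act one x = x),
      (forall g h x, act (mul g h) x = act g (act h x))
    & continuous (fun q : G * X => act q.1 q.2)].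

(* The G-orbit of x; Delta is the partition of X into these orbits. *)
Definition G_orbit (G X : Type) (act : G -> X -> X) (x : X) : set X :=
  [set act g x | g in [set: G]].

(* (Y, p) is the orbit space X/G with the quotient topology:
   p is onto, its fibres are exactly the orbits, and V is open in Y
   iff p^-1(V) is open in X. *)
Definition is_orbit_quotient (G X Y : topologicalType)
  (act : G -> X -> X) (p : X -> Y) : Prop :=
  [/\ (forall y : Y, exists x, p x = y),
      (forall x x', p x = p x' <-> G_orbit act x x')
    & (forall V : set Y, open V <-> open (p @^-1` V))].

Definition nowhere_dense (T : topologicalType) (A : set T) : Prop :=
  interior (closure A) = set0.

Definition baire_space (T : topologicalType) : Prop :=
  ~ exists F : nat -> set T,
      (forall n, nowhere_dense (F n)) /\ \bigcup_n F n = [set: T].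

Definition Delta_map (G X : topologicalType) (act : G -> X -> X)
  (h : X -> X) : Prop :=
  continuous h /\ forall x, exists x', h @` G_orbit act x `<=` G_orbit act x'.

Definition End_Delta (G X : topologicalType) (act : G -> X -> X)
  : set {compact-open, X -> X} := [set h | Delta_map act h].

(* Property (CONT): the map psi : End(X,Delta) -> End(Y), characterized by
   p \o h = psi h \o p, is continuous for the compact-open topologies
   (End(X,Delta) with the subspace topology). *)
Definition prop_CONT (G X Y : topologicalType) (act : G -> X -> X)
  (p : X -> Y) : Prop :=
  forall psi : {compact-open, X -> X} -> {compact-open, Y -> Y},
    (forall h, Delta_map act h -> p \o h = psi h \o p) ->
    {within End_Delta act, continuous psi}.

Definition prop_COMP (X Y : topologicalType) (p : X -> Y) : Prop :=
  forall L : set Y, compact L -> exists K : set X, compact K /\ p @` K = L.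

From HB Require Import structures.
From mathcomp Require Import all_boot all_order all_algebra.
From mathcomp Require Import all_classical all_reals all_analysis.
Local Open Scope classical_set_scope.

(* If every G-orbit is dense in X, then every nonempty open subset of the
   orbit space Y = X/G pulls back to a nonempty open G-invariant subset of X,
   which meets every orbit; hence Y is indiscrete.  Two consequences follow:
   - every map into the compact-open space Y -> Y is continuous, which gives
     property (CONT) for free;
   - every subset of Y is compact.  In particular Y minus the point p(x0) is
     compact.  If (COMP) held, some compact K in X would map onto it; then X
     is covered by the countably many compact (hence closed) sets G_i.x0 and
     G_i.K.  The first ones miss the dense orbit of a point x1 outside the
     orbit of x0, the second ones miss the dense orbit of x0, so all of them
     are nowhere dense, contradicting the Baire property of X. *)

Definition indiscrete (T : topologicalType) : Prop :=
  forall O : set T, open O -> O !=set0 -> O = setT.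

(* In an indiscrete space every subset is compact: any proper filter on A
   clusters at any point of A, since that point has only the trivial
   neighbourhood. *)
Lemma indiscrete_compact (T : topologicalType) :
  indiscrete T -> forall A : set T, compact A.
Proof.
move=> indT A; have [->|/set0P[y Ay]] := eqVneq A set0; first exact: compact0.
move=> F PF FA; exists y; split => // B N FB.
rewrite nbhsE => -[U [oU Uy] UN].
have Utop : U = setT by apply: indT => //; exists y.
have [z [_ Bz]] := filter_ex (filterI FA FB).
by exists z; split => //; apply: UN; rewrite Utop.
Qed.

(* With an indiscrete target, the compact-open conditions [f K `<=` O] are
   either vacuous or trivially true, so any map into the function space is
   continuous. *)
Lemma indiscrete_compact_open_continuous (W U V : topologicalType)
    (f : W -> {compact-open, U -> V}) :
  indiscrete V -> continuous f.
Proof.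
move=> indV w; apply/compact_open_cvgP => K O _ oO fKO.
apply: filterS (filterT); move=> g _ _ [k Kk <-].
have Otop : O = setT by apply: indV => //; exists (f w k); apply: fKO; exists k.
by rewrite Otop.
Qed.

Lemma closed_nowhere_dense (T : topologicalType) (A : set T) :
  closed A -> A° = set0 -> nowhere_dense A.
Proof. by move=> cA; rewrite /nowhere_dense -(proj1 (closure_id A) cA). Qed.

Lemma dense_disjoint_interior (T : topologicalType) (D A : set T) :
  dense D -> D `&` A = set0 -> A° = set0.
Proof.
move=> dD DA; apply/seteqP; split => // z Az.
have [w [Aw Dw]] := dD _ (ex_intro _ z Az) (open_interior A).
have : (D `&` A) w by split => //; apply: interior_subset.
by rewrite DA.
Qed.

(* A Baire space is not covered by two sequences of nowhere dense sets
   (interleave them into a single sequence). *)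
Lemma baire_no_cover2 (T : topologicalType) (A B : nat -> set T) :
  baire_space T -> (forall n, nowhere_dense (A n)) ->
  (forall n, nowhere_dense (B n)) ->
  \bigcup_n A n `|` \bigcup_n B n <> setT.
Proof.
move=> bT ndA ndB cover; apply: bT.
exists (fun n => if odd n then B n./2 else A n./2); split.
  by move=> n; case: (odd n).
apply/seteqP; split => // z _.
have : (\bigcup_n A n `|` \bigcup_n B n) z by rewrite cover.
case=> -[n _ z_n]; [exists n.*2 | exists n.*2.+1] => //.
- by rewrite odd_double doubleK.
- by rewrite /= odd_double /= uphalf_double.
Qed.

Section OrbitQuotient.
Context {G X Y : topologicalType} {act : G -> X -> X} {p : X -> Y}.
Hypothesis quotient : is_orbit_quotient act p.

Lemma orbit_fibreE (x : X) : G_orbit act x = [set z | p x = p z].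
Proof.
case: quotient => _ fibre _.
by apply/seteqP; split => z /fibre.
Qed.

Lemma quotient_act (g : G) (x : X) : p (act g x) = p x.
Proof.
have : G_orbit act x (act g x) by exists g.
by rewrite orbit_fibreE /= => ->.
Qed.

Lemma orbit_disjoint (P : set Y) (x : X) (A : set X) :
  p @` A `<=` P -> ~ P (p x) -> G_orbit act x `&` A = set0.
Proof.
move=> pA nPx; apply/seteqP; split => // z [].
rewrite orbit_fibreE /= => pxz Az.
by apply: nPx; rewrite pxz; apply: pA; exists z.
Qed.

(* If all orbits are dense, the orbit space is indiscrete: the preimage of a
   nonempty open set is open and meets every (dense) orbit. *)
Lemma dense_orbits_indiscrete :
  (forall x : X, dense (G_orbit act x)) -> indiscrete Y.
Proof.
move=> dense_orbits O oO [y Oy]; apply/seteqP; split => // y' _.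
case: quotient => onto _ openE.
have [x pxy] := onto y; have [x' <-] := onto y'.
have Ox : (p @^-1` O) x by rewrite /= pxy.
have [z [Oz [g _ gz]]] := dense_orbits x' _ (ex_intro _ x Ox) (proj1 (openE O) oO).
by rewrite -(quotient_act g) gz.
Qed.

Lemma dense_orbits_CONT :
  (forall x : X, dense (G_orbit act x)) -> prop_CONT act p.
Proof.
move=> dense_orbits psi _; apply: continuous_subspaceT.
exact/indiscrete_compact_open_continuous/dense_orbits_indiscrete.
Qed.

Definition act_image (S : set G) (T : set X) : set X :=
  (fun q : G * X => act q.1 q.2) @` (S `*` T).

Lemma act_image_compact (S : set G) (T : set X) :
  continuous (fun q : G * X => act q.1 q.2) ->
  compact S -> compact T -> compact (act_image S T).
Proof.
move=> cact cS cT; apply: continuous_compact; last exact: compact_setX.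
exact: continuous_subspaceT.
Qed.

Lemma act_image_quotient (S : set G) (T : set X) :
  p @` act_image S T `<=` p @` T.
Proof. by move=> _ [_ [[g x] [_ Tx] <-] <-]; exists x; rewrite ?quotient_act. Qed.

Lemma act_image_cover (S : nat -> set G) (T : set X) :
  \bigcup_i S i = setT ->
  \bigcup_i act_image (S i) T = \bigcup_(x in T) G_orbit act x.
Proof.
move=> coverS; apply/seteqP; split.
  by move=> _ [i _ [[g x] [_ Tx] <-]]; exists x => //; exists g.
move=> _ [x Tx [g _ <-]].
have : (\bigcup_i S i) g by rewrite coverS.
by case=> i _ Sg; exists i => //; exists (g, x).
Qed.

Lemma no_compact_lift {Gi : nat -> set G} {x0 x1 : X} :
  continuous (fun q : G * X => act q.1 q.2) ->
  hausdorff_space X -> baire_space X ->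
  (forall i, compact (Gi i)) -> \bigcup_i Gi i = setT ->
  (forall x : X, dense (G_orbit act x)) -> p x0 <> p x1 ->
  ~ exists K : set X, compact K /\ p @` K = ~` [set p x0].
Proof.
move=> cact hX bX cGi coverG dense_orbits n01 [K [cK pK]].
have closed_image T i : compact T -> closed (act_image (Gi i) T).
  by move=> cT; apply: compact_closed => //; exact: act_image_compact.
apply: (@baire_no_cover2 X (fun i => act_image (Gi i) [set x0])
                           (fun i => act_image (Gi i) K) bX).
- move=> i; apply: closed_nowhere_dense; first exact/closed_image/compact_set1.
  apply: (dense_disjoint_interior _ _ _ (dense_orbits x1)).
  apply: (orbit_disjoint [set p x0] x1) => [y /act_image_quotient|].
    by rewrite image_set1.
  by move=> /esym.
- move=> i; apply: closed_nowhere_dense; first exact: closed_image.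
  apply: (dense_disjoint_interior _ _ _ (dense_orbits x0)).
  apply: (orbit_disjoint (~` [set p x0]) x0) => [y|]; last by apply; exact: erefl.
  by rewrite -pK; apply: act_image_quotient.
rewrite !act_image_cover // bigcup_set1; apply/seteqP; split => // z _.
have [e|ne] := pselect (p x0 = p z); first by left; rewrite orbit_fibreE.
have : (p @` K) (p z) by rewrite pK => /esym.
by case=> k Kk pk; right; exists k => //; rewrite orbit_fibreE.
Qed.

End OrbitQuotient.

Theorem mainTheorem10
  (G : topologicalType) (mul : G -> G -> G) (inv : G -> G) (one : G)
  (HG : is_topological_group mul inv one)
  (X : topologicalType) (act : G -> X -> X)
  (Hact : is_continuous_action mul one act)
  (Y : topologicalType) (p : X -> Y) (Hp : is_orbit_quotient act p)
  (Ha : hausdorff_space X /\ baire_space X)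
  (Gi : nat -> set G)
  (Hb : (forall i, compact (Gi i)) /\ \bigcup_i Gi i = [set: G])
  (Hc : exists x x' : X, G_orbit act x <> G_orbit act x')
  (Hd : forall x : X, dense (G_orbit act x)) :
  prop_CONT act p /\ ~ prop_COMP p.
Proof.
split; first exact: dense_orbits_CONT.
move=> comp; have [x0 [x1 distinct_orbits]] := Hc.
have n01 : p x0 <> p x1.
  by move=> e; apply: distinct_orbits; rewrite !(orbit_fibreE Hp) e.
have [_ _ cact] := Hact; have [hX bX] := Ha; have [cGi coverG] := Hb.
apply: (no_compact_lift Hp cact hX bX cGi coverG Hd n01).
exact/comp/indiscrete_compact/(dense_orbits_indiscrete Hp).
Qed.
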